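(* Let $p\ge 2$ and $n\ge 1$ be integers. If there exists a $p$-gadget on $n$ vertices, then there exists a $p$-solvable oriented graph on $n\binom{p}{2}+p$ vertices.
   Context: A directed graph $D=(V,E)$ has arcs $E \subseteq \{(u,v)\in V^2 : u \neq v\}$; it is an oriented graph if it never contains both $(u,v)$ and $(v,u)$. $N^-(v)=\{u:(u,v)\in E\}$. For $q\ge2$ let $[q]=\{0,\dots,q-1\}$. A $D$-function over $[q]$ is a map $f=(f_v)_{v\in V}:[q]^V\to[q]^V$ with each $f_v(x)$ depending only on $(x_u)_{u\in N^-(v)}$. $D$ is $q$-solvable if some $D$-function $f$ over $[q]$ has the property that for every $x\in[q]^V$ there is $v$ with $f_v(x)=x_v$. A $q$-gadget is an oriented graph $D$ with vertices labelled $1,\dots,n$ which is not $q$-solvable, but for which there exist a $D$-function $f$ over $[q]$ and a function $\phi:[q]^{n-1}\to[q]$ such that every $x\in[q]^n$ with $f_v(x)\ne x_v$ for all $v$ satisfies $x_1=\phi(x_2,\dots,x_n)$. *)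

From mathcomp Require Import all_boot.
Set Implicit Arguments. Unset Strict Implicit. Unset Printing Implicit Defensive.

(* A digraph on vertex set 'I_n is given by its arc relation E : rel 'I_n,
   where E u v means (u,v) is an arc. Configurations x in [q]^V are
   finite functions {ffun 'I_n -> 'I_q}. *)

Definition config (n q : nat) := {ffun 'I_n -> 'I_q}.

Definition oriented (n : nat) (E : rel 'I_n) : Prop :=
  (forall u, ~~ E u u) /\ (forall u v, E u v -> ~~ E v u).

Definition Dfunction (n q : nat) (E : rel 'I_n)
    (f : config n q -> config n q) : Prop :=
  forall (x y : config n q) (v : 'I_n),
    (forall u, E u v -> x u = y u) -> f x v = f y v.

Definition solvable (n q : nat) (E : rel 'I_n) : Prop :=
  exists f : config n q -> config n q,
    Dfunction E f /\ forall x : config n q, exists v, f x v = x v.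

(* q-gadget: vertices labelled 1..n are 'I_n with label i+1 <-> index i,
   so vertex "1" is the vertex of index 0. phi : [q]^{n-1} -> [q] is encoded
   as a map on configurations that does not depend on coordinate 0. *)
Definition gadget (n q : nat) (E : rel 'I_n) : Prop :=
  oriented E /\ ~ solvable q E /\
  exists (f : config n q -> config n q) (phi : config n q -> 'I_q),
    Dfunction E f /\
    (forall x y : config n q,
        (forall u : 'I_n, val u != 0 -> x u = y u) -> phi x = phi y) /\
    (forall x : config n q, (forall v, f x v != x v) ->
        forall u : 'I_n, val u = 0 -> x u = phi x).

From mathcomp Require Import all_boot.
From mathcomp Require Import ssralg zmodp.
Import GRing.Theory.

Set Implicit Arguments. Unset Strict Implicit. Unset Printing Implicit Defensive.

(* From a p-gadget (E0, f0, phi) on n vertices we build a p-solvable oriented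
   graph on the vertex set V = [p] + (pairs {m < k} of [p]) * [n]:
   - the p "top" vertices form a transitive tournament, k -> m whenever m < k;
   - each pair t = {m < k} carries a copy of the gadget, fed by the arc
     m -> copy t and feeding the arc copy t -> k.
   Copy t runs the gadget function with its distinguished vertex 0 shifted by
   the value x_m.  If no vertex of copy t is fixed, the gadget property forces
   x_m = x_(t,0) - phi, so top vertex k can read off x_m for every m < k, and
   it sees x_m for m > k directly.  Top vertex k guesses k - sum_(m <> k) x_m;
   when all copies are unfixed all these estimates are exact, and the top
   vertex k = sum_m x_m guesses correctly.  Finally the graph is relabelled
   onto 'I_N with N = #|V| = n * 'C(p, 2) + p. *)

Definition oriented_rel (T : finType) (E : rel T) : Prop :=
  (forall u, ~~ E u u) /\ (forall u v, E u v -> ~~ E v u).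

Definition Dfunction_rel (T : finType) (q : nat) (E : rel T)
    (f : {ffun T -> 'I_q} -> {ffun T -> 'I_q}) : Prop :=
  forall (x y : {ffun T -> 'I_q}) v,
    (forall u, E u v -> x u = y u) -> f x v = f y v.

Definition solvable_rel (T : finType) (q : nat) (E : rel T) : Prop :=
  exists f, @Dfunction_rel T q E f /\
    forall x : {ffun T -> 'I_q}, exists v, f x v = x v.

Section Relabel.
Variables (S T : finType) (g : S -> T) (h : T -> S).
Hypothesis hK : cancel h g.

Definition relabel (E : rel T) : rel S := [rel u v | E (g u) (g v)].

Lemma relabel_oriented (E : rel T) : oriented_rel E -> oriented_rel (relabel E).
Proof. by case=> irr asym; split=> [u|u v]; [exact: irr | exact: asym]. Qed.

Lemma relabel_solvable (q : nat) (E : rel T) :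
  solvable_rel q E -> solvable_rel q (relabel E).
Proof.
case=> f [Df sol].
pose pull (x : {ffun S -> 'I_q}) : {ffun T -> 'I_q} := [ffun a => x (h a)].
exists (fun x => [ffun v => f (pull x) (g v)]); split.
  move=> x y v Exy; rewrite !ffunE; apply: Df => a Eav; rewrite !ffunE.
  by apply: Exy; rewrite /relabel /= hK.
move=> x; have [a fixed_a] := sol (pull x).
by exists (h a); rewrite ffunE hK fixed_a ffunE.
Qed.

End Relabel.

Lemma oriented_solvable_ord (T : finType) (q N : nat) (E : rel T) :
  #|T| = N -> oriented_rel E -> solvable_rel q E ->
  exists E' : rel 'I_N, oriented E' /\ solvable q E'.
Proof.
move=> <- orE solE; exists (relabel (@enum_val T _) E); split.
  exact: relabel_oriented.
exact: (relabel_solvable (@enum_rankK T) solE).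
Qed.

(* Hat guessing on a complete graph over Z/p: if everyone guesses
   k - (sum of the others), the player k = (total sum) is right. *)
Lemma sum_guess (p : nat) (x : 'I_p.+2 -> 'I_p.+2) :
  exists k : 'I_p.+2, (k - \sum_(m < p.+2 | m != k) x m)%R = x k.
Proof.
exists (\sum_(m < p.+2) x m)%R.
by rewrite {1}(bigD1 (\sum_(m < p.+2) x m)%R) //= addrK.
Qed.

Section Construction.
Variables (p' n' : nat).
Local Notation p := p'.+2.
Local Notation n := n'.+1.
Variables (E0 : rel 'I_n) (f0 : config n p -> config n p) (phi : config n p -> 'I_p).
Hypothesis irr0 : forall u, ~~ E0 u u.
Hypothesis asym0 : forall u v, E0 u v -> ~~ E0 v u.
Hypothesis Df0 : Dfunction E0 f0.
Hypothesis phi_indep : forall x y : config n p,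
  (forall u : 'I_n, val u != 0 -> x u = y u) -> phi x = phi y.
Hypothesis gadget0 : forall x : config n p, (forall v, f0 x v != x v) ->
  forall u : 'I_n, val u = 0 -> x u = phi x.

Definition shift0 (c : 'I_p) (z : config n p) : config n p :=
  [ffun u => if u == ord0 then (z u + c)%R else z u].

Lemma shift0K (c : 'I_p) (z : config n p) : shift0 c (shift0 (- c)%R z) = z.
Proof. by apply/ffunP => u; rewrite !ffunE; case: eqP => // _; rewrite subrK. Qed.

Lemma shift0_eq (c : 'I_p) (a b : config n p) u :
  (shift0 c a u == shift0 c b u) = (a u == b u).
Proof. by rewrite !ffunE; case: ifP => _ //; apply/eqP/eqP => [/addIr|->]. Qed.

Definition gadget_copy (c : 'I_p) (z : config n p) : config n p :=
  shift0 c (f0 (shift0 (- c)%R z)).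

Lemma gadget_copy_local (c : 'I_p) (z z' : config n p) u :
  (forall w, E0 w u -> z w = z' w) -> gadget_copy c z u = gadget_copy c z' u.
Proof.
move=> Ezz'; rewrite !ffunE; congr (if _ then (_ + _)%R else _);
  by apply: Df0 => w /Ezz' eq_w; rewrite !ffunE eq_w.
Qed.

Lemma gadget_copy_unfixed (c : 'I_p) (z : config n p) :
  (forall u, gadget_copy c z u != z u) -> c = (z ord0 - phi z)%R.
Proof.
move=> unfixed; set y := shift0 (- c)%R z.
have y_unfixed v : f0 y v != y v by rewrite -(shift0_eq c) shift0K unfixed.
have phi_y : phi y = phi z.
  by apply: phi_indep => u u_neq0; rewrite /y ffunE ifN.
have := gadget0 y_unfixed (u := ord0) erefl.
by rewrite phi_y ffunE eqxx => <-; rewrite opprB addrC subrK.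
Qed.

Definition Pair := {t : 2.-tuple 'I_p | sorted ltn (map val t)}.
Definition lo (t : Pair) : 'I_p := tnth (val t) ord0.
Definition hi (t : Pair) : 'I_p := tnth (val t) (@Ordinal 2 1 isT).

Lemma lo_lt_hi (t : Pair) : lo t < hi t.
Proof. by case: t => [[[|a [|b [|]]] //= size_t]]; rewrite /lo /hi /tnth /= => /andP[]. Qed.

Definition V := ('I_p + (Pair * 'I_n))%type.

Lemma card_V : #|{: V}| = n * 'C(p, 2) + p.
Proof.
rewrite card_sum card_prod !card_ord card_sig addnC mulnC.
by rewrite -card_ltn_sorted_tuples; congr (_ * _ + _); apply: eq_card => t; rewrite !inE.
Qed.

Definition ER (a b : V) : bool :=
  match a, b with
  | inl a, inl b => b < a
  | inl a, inr (t, _) => a == lo t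
  | inr (t, _), inl b => b == hi t
  | inr (t, u), inr (s, w) => (t == s) && E0 u w
  end.

Lemma ER_oriented : oriented_rel ER.
Proof.
split; first by case=> [a|[t u]] /=; rewrite ?ltnn ?eqxx ?irr0.
have lo_neq_hi t : (lo t == hi t) = false by rewrite -val_eqE ltn_eqF ?lo_lt_hi.
case=> [a|[t u]] [b|[s w]] /=.
- by rewrite -leqNgt => /ltnW.
- by move=> /eqP ->; rewrite lo_neq_hi.
- by move=> /eqP ->; rewrite eq_sym lo_neq_hi.
- by case/andP=> /eqP -> /asym0 /negbTE ->; rewrite andbF.
Qed.

Definition view (t : Pair) (X : {ffun V -> 'I_p}) : config n p :=
  [ffun u => X (inr (t, u))].

(* Top vertex k's estimate of x_m: read directly if m > k, and recovered
   from copy {m < k} (assuming that copy is unfixed) if m < k. *)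
Definition estimate (X : {ffun V -> 'I_p}) (k m : 'I_p) : 'I_p :=
  if (insub [tuple m; k] : option Pair) is Some t
  then (X (inr (t, ord0)) - phi (view t X))%R
  else X (inl m).

Definition FF (X : {ffun V -> 'I_p}) : {ffun V -> 'I_p} :=
  [ffun v : V => match v with
   | inl k => (k - \sum_(m < p | m != k) estimate X k m)%R
   | inr (t, u) => gadget_copy (X (inl (lo t))) (view t X) u
   end].

Lemma FF_Dfunction : Dfunction_rel ER FF.
Proof.
move=> x y [k|[t u]] Exy; rewrite [FF x _]ffunE [FF y _]ffunE.
  congr (_ - _)%R; apply: eq_bigr => m m_neq_k; rewrite /estimate.
  case: insubP => [t _ val_t|not_lt].
    have hi_t : hi t = k by rewrite /hi val_t.
    congr (_ - phi _)%R; first by apply: Exy; rewrite /= hi_t.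
    by apply/ffunP => w; rewrite !ffunE; apply: Exy; rewrite /= hi_t.
  apply: Exy => /=; move: not_lt; rewrite /= andbT -leqNgt leq_eqVlt.
  by case/orP=> // /eqP/val_inj m_eq_k; rewrite m_eq_k eqxx in m_neq_k.
rewrite (Exy (inl (lo t))) /= ?eqxx //; apply: gadget_copy_local => w E0wu.
by rewrite !ffunE; apply: Exy; rewrite /= eqxx.
Qed.

(* Some vertex always guesses its own value: either inside a copy, or,
   when all copies are unfixed, the top vertex k = sum of the top values. *)
Lemma FF_fixed_point (X : {ffun V -> 'I_p}) : exists v, FF X v = X v.
Proof.
have [/existsP[[t u] /eqP fixed] | copies_unfixed] :=
  boolP [exists tu : Pair * 'I_n, FF X (inr tu) == X (inr tu)].
  by exists (inr (t, u)).
have lo_recovered t : X (inl (lo t)) = (X (inr (t, ord0)) - phi (view t X))%R.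
  have := @gadget_copy_unfixed (X (inl (lo t))) (view t X); rewrite ffunE; apply=> u.
  apply: contra copies_unfixed => fixed; apply/existsP; exists (t, u).
  by rewrite [FF X _]ffunE -[X (inr (t, u))](ffunE (fun u => X (inr (t, u)))).
have estimate_exact k m : m != k -> estimate X k m = X (inl m).
  rewrite /estimate; case: insubP => [t _ val_t _|//].
  by rewrite -lo_recovered /lo val_t.
have [k guess_k] := sum_guess (fun m => X (inl m)).
exists (inl k); rewrite ffunE -guess_k.
by congr (_ - _)%R; apply: eq_bigr => m; apply: estimate_exact.
Qed.

Lemma ER_solvable : solvable_rel p ER.
Proof. by exists FF; split; [exact: FF_Dfunction | exact: FF_fixed_point]. Qed.

End Construction.

Theorem lemma8 (p n : nat) (hp : 2 <= p) (hn : 1 <= n) :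
  (exists E : rel 'I_n, gadget p E) ->
  exists E : rel 'I_(n * 'C(p, 2) + p), oriented E /\ solvable p E.
Proof.
case: p hp => [|[|p']] // _; case: n hn => [|n'] // _.
move=> [E0 [[irr0 asym0] [_ [f0 [phi [Df0 [phi_indep gadget0]]]]]]].
apply: (oriented_solvable_ord (E := ER E0) (card_V p' n')).
  exact: ER_oriented.
exact: ER_solvable Df0 phi_indep gadget0.
Qed.
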